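(* Let $\sigma\in\,]-\tfrac52,\tfrac32[$, $\sigma\ne-\tfrac12$. Then, with two-sided constants independent of $(\lambda,\zeta)\in\mathbb{S}\times(\mathbb{Z}^2\setminus\{0\})$: - if $\sigma>-\tfrac12$: $M_\sigma(\lambda,\zeta)\sim\dfrac{\langle\zeta\rangle^{-\sigma}}{\langle\omega\rangle^2}$; - if $\sigma<-\tfrac12$: $M_\sigma(\lambda,\zeta)\sim\dfrac{\langle\zeta\rangle^{-\sigma}}{\langle\omega\rangle^2}\mathbf{1}_{\langle\zeta\rangle\ge\langle\omega\rangle^\kappa}+\dfrac{\langle\omega\rangle^{-\sigma}}{\langle\omega\rangle^{5/2}}\mathbf{1}_{\langle\zeta\rangle\le\langle\omega\rangle^\kappa}$, where $\kappa=\dfrac{2\sigma+1}{2\sigma}$.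
   Context: Fix $a>0$, $\nu>0$, $\alpha\in\mathbb{R}$, $\beta,\gamma>0$, $\Omega=\mathbb{T}^2\times(0,a)$, $\mathbb{T}^2=(\mathbb{R}/2\pi\mathbb{Z})^2$. Let $\mathcal{V}=\mathcal{V}_1\times\mathcal{V}_2$, where $\mathcal{V}_1$ is the closure in $H^1(\Omega)^2$ of smooth $(u,v)$ periodic in $x,y$, vanishing at $z=0,a$, with $\int_0^a(\partial_xu+\partial_yv)dz=0$, and $\mathcal{V}_2$ the closure in $H^1(\Omega)$ of smooth $\theta$ periodic in $x,y$ vanishing at $z=0,a$. For $X=(u,v,\theta),X'=(u',v',\theta')\in\mathcal{V}$ put $(X,X')_{\mathcal{H}}=\int_\Omega(u\bar u'+v\bar v'+\frac\beta\gamma\theta\bar\theta')$, $(X,X')_{\mathcal{V}}=\int_\Omega(\nabla u\cdot\nabla\bar u'+\nabla v\cdot\nabla\bar v'+\frac\beta\gamma\nabla\theta\cdot\nabla\bar\theta')$, $w=-\int_0^z(\partial_xu+\partial_yv)$, $w'=-\int_0^z(\partial_xu'+\partial_yv')$, $B(X,X')=-\int_\Omega\theta\bar w'+\int_\Omega w\bar\theta'$, $C(X,X')=-\int_\Omega v\bar u'+\int_\Omega u\bar v'$, $\langle PX,X'\rangle=\nu(X,X')_{\mathcal{V}}+\beta B(X,X')+\alpha C(X,X')$, and $\mathbb{V}_P=\{\lambda\in\mathbb{C}:\exists X\in\mathcal{V}\setminus\{0\},\ \lambda(X,X')_{\mathcal{H}}+\langle PX,X'\rangle=0\ \forall X'\in\mathcal{V}\}$.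 Let $\mathbb{S}=\{-\delta_2-\mu_1+i\mu_2:(\mu_1,\mu_2)\in\mathbb{R}^2,\ |\mu_2|\ge\mu_1/\delta_1\}$, where $\delta_1>0$ is small enough that $\mathbb{S}\cap\mathbb{V}_P=\emptyset$ and $\delta_2<\min(\frac{\nu\pi^2}{2a^2},\frac\nu2)$. For $\lambda\in\mathbb{S}$, $\zeta\in\mathbb{Z}^2$: $\langle\zeta\rangle=1+|\zeta|$, $\langle\omega\rangle^2=|\lambda|+\langle\zeta\rangle^2$, and $M_\sigma(\lambda,\zeta)=\big(\sum_{k\ge1}\frac{1}{k^2(k^4+\langle\omega\rangle^4)(k^2+\langle\zeta\rangle^2)^\sigma}\big)^{1/2}$ (finite for $\sigma>-\frac52$). $A\sim B$ means there are constants $C_1,C_2>0$ with $C_1B(\lambda,\zeta)\le A(\lambda,\zeta)\le C_2B(\lambda,\zeta)$ for all $(\lambda,\zeta)\in\mathbb{S}\times(\mathbb{Z}^2\setminus\{0\})$. *)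

From Stdlib Require Import Reals ZArith Lra.
From Coquelicot Require Import Coquelicot.
Open Scope R_scope.

Definition jz (z1 z2 : Z) : R := 1 + sqrt (IZR z1 ^ 2 + IZR z2 ^ 2).

Definition jw (lam : C) (z1 z2 : Z) : R := sqrt (Cmod lam + (jz z1 z2) ^ 2).

Definition M_term (sigma : R) (lam : C) (z1 z2 : Z) (k : nat) : R :=
  let kk := INR (S k) in
  / (kk ^ 2 * (kk ^ 4 + (jw lam z1 z2) ^ 4)
       * Rpower (kk ^ 2 + (jz z1 z2) ^ 2) sigma).

Definition M_sigma (sigma : R) (lam : C) (z1 z2 : Z) : R :=
  sqrt (Series (M_term sigma lam z1 z2)).

Definition in_S (d1 d2 : R) (lam : C) : Prop :=
  exists m1 m2 : R, lam = ((- d2 - m1)%R, m2) /\ Rabs m2 >= m1 / d1.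

Definition sim_on (d1 d2 : R) (A B : C -> Z -> Z -> R) : Prop :=
  exists C1 C2 : R, 0 < C1 /\ 0 < C2 /\
    forall (lam : C) (z1 z2 : Z), in_S d1 d2 lam -> (z1 <> 0%Z \/ z2 <> 0%Z) ->
      C1 * B lam z1 z2 <= A lam z1 z2 /\ A lam z1 z2 <= C2 * B lam z1 z2.

Definition ind_le (x y : R) : R := if Rle_dec x y then 1 else 0.

From Stdlib Require Import Reals ZArith Lra Lia.
From Coquelicot Require Import Coquelicot.
Open Scope R_scope.

(* Write Z = <zeta> >= 2, W = <omega> >= Z and t_k = k^-2 (k^4 + W^4)^-1 (k^2 + Z^2)^-sigma,
   so that M_sigma^2 = sum_k t_k.  The first term alone is of order A = Z^(-2 sigma) W^-4.
   For sigma >= 0, t_k <= A k^-2.  For sigma < 0, (k^2 + Z^2)^-sigma <~ Z^(-2 sigma) + k^(-2 sigma),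
   and the second part contributes sum_k k^(-2 sigma - 2) / (k^4 + W^4): when sigma > -1/2 the
   exponent is below -1 and this is O(W^-4) = O(A); when sigma < -1/2 the head k <= W and the
   tail k > W are both of order B = W^(-2 sigma - 5).  Hence M_sigma^2 is comparable to A, resp.
   to A + B ~ max(A, B), and B <= A exactly when W^kappa <= Z.  Sums of powers are bounded by
   telescoping, comparing (k+1)^p - k^p with p k^(p-1) through the mean value theorem. *)

Lemma Rpower_pos (x y : R) : 0 < Rpower x y.
Proof. apply exp_pos. Qed.

Lemma Rpower_1_l (y : R) : Rpower 1 y = 1.
Proof. unfold Rpower. rewrite ln_1, Rmult_0_r. apply exp_0. Qed.

Lemma Rpower_ge_1 (x y : R) : 1 <= x -> 0 <= y -> 1 <= Rpower x y.
Proof. intros Hx Hy. rewrite <- (Rpower_O x) by lra. apply Rle_Rpower; lra. Qed.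

Lemma Rpower_2 (x : R) : 0 < x -> Rpower x 2 = x ^ 2.
Proof. intros Hx. replace 2 with (INR 2) at 1 by (simpl; ring). apply Rpower_pow; lra. Qed.

Lemma Rpower_sq (x a : R) : 0 < x -> Rpower (x ^ 2) a = Rpower x (2 * a).
Proof. intros Hx. rewrite <- Rpower_2, Rpower_mult by lra. reflexivity. Qed.

Lemma Rpower_div_pow (x a : R) (n : nat) : 0 < x -> Rpower x a / x ^ n = Rpower x (a - INR n).
Proof. intros Hx. unfold Rminus, Rdiv. rewrite Rpower_plus, Rpower_Ropp, Rpower_pow; lra. Qed.

Lemma Rpower_le_base_nonpos (x y a : R) : a <= 0 -> 0 < x <= y -> Rpower y a <= Rpower x a.
Proof.
  intros Ha Hxy. rewrite <- (Ropp_involutive a), (Rpower_Ropp y), (Rpower_Ropp x).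
  apply Rinv_le_contravar; [apply Rpower_pos|]. apply Rle_Rpower_l; lra.
Qed.

Lemma Rpower_le_double (x y a : R) : 0 < x -> x <= y <= 2 * x ->
  Rpower y a <= Rpower 2 (Rabs a) * Rpower x a /\
  Rpower x a <= Rpower 2 (Rabs a) * Rpower y a.
Proof.
  intros Hx Hxy.
  assert (H2x : Rpower (2 * x) a = Rpower 2 a * Rpower x a)
    by (rewrite Rpower_mult_distr; lra).
  pose proof (Rpower_pos x a); pose proof (Rpower_pos y a).
  destruct (Rle_or_lt 0 a) as [Ha | Ha].
  - rewrite Rabs_pos_eq by lra.
    pose proof (Rpower_ge_1 2 a ltac:(lra) Ha).
    assert (Rpower x a <= Rpower y a) by (apply Rle_Rpower_l; lra).
    split; [rewrite <- H2x; apply Rle_Rpower_l|]; nra.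
  - rewrite Rabs_left by lra.
    pose proof (Rpower_ge_1 2 (- a) ltac:(lra) ltac:(lra)).
    assert (Rpower y a <= Rpower x a) by (apply Rpower_le_base_nonpos; lra).
    assert (H2y : Rpower (2 * x) a <= Rpower y a) by (apply Rpower_le_base_nonpos; lra).
    assert (Hinv : Rpower 2 (- a) * Rpower 2 a = 1)
      by (rewrite <- Rpower_plus, Rplus_opp_l; apply Rpower_O; lra).
    split; [nra|].
    rewrite H2x in H2y.
    apply Rle_trans with (Rpower 2 (- a) * (Rpower 2 a * Rpower x a)); [right; nra|].
    apply Rmult_le_compat_l; lra.
Qed.

Lemma Rpower_add_le (u v a : R) : 0 < u -> 0 < v -> 0 <= a ->
  Rpower (u + v) a <= Rpower 2 a * (Rpower u a + Rpower v a).
Proof.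
  intros Hu Hv Ha. pose proof (Rpower_pos u a); pose proof (Rpower_pos v a).
  assert (Hmax : Rpower (Rmax u v) a <= Rpower u a + Rpower v a)
    by (unfold Rmax; destruct (Rle_dec u v); lra).
  assert (Hm : 0 < Rmax u v) by (apply Rlt_le_trans with u; [lra | apply Rmax_l]).
  apply Rle_trans with (Rpower (2 * Rmax u v) a).
  - apply Rle_Rpower_l; [lra|]. pose proof (Rmax_l u v); pose proof (Rmax_r u v); lra.
  - rewrite <- Rpower_mult_distr by lra.
    apply Rmult_le_compat_l; [apply Rlt_le, Rpower_pos | exact Hmax].
Qed.

Lemma Rpower_succ_sub (s x : R) : 1 <= x ->
  exists xi, Rpower (x + 1) s - Rpower x s = s * Rpower xi (s - 1) /\
    Rpower x (s - 1) <= Rpower 2 (Rabs (s - 1)) * Rpower xi (s - 1) /\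
    Rpower xi (s - 1) <= Rpower 2 (Rabs (s - 1)) * Rpower x (s - 1).
Proof.
  intros Hx.
  destruct (MVT_cor2 (fun t => Rpower t s) (fun t => s * Rpower t (s - 1)) x (x + 1))
    as [xi [Hmvt Hxi]]; [lra | intros; apply derivable_pt_lim_power; lra |].
  exists xi. replace (x + 1 - x) with 1 in Hmvt by ring.
  destruct (Rpower_le_double x xi (s - 1)); [lra | lra |]. split; [lra | tauto].
Qed.


(** * Telescoping sums and series *)

Lemma sum_f_R0_le_telescope (u Y : nat -> R) : (forall k, u k <= Y k - Y (S k)) ->
  forall N, sum_f_R0 u N <= Y O - Y (S N).
Proof. intros H N; induction N; simpl; [apply H|]. specialize (H (S N)); lra. Qed.

Lemma sum_f_R0_ge_telescope (u Y : nat -> R) : (forall k, Y k - Y (S k) <= u k) ->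
  forall N, Y O - Y (S N) <= sum_f_R0 u N.
Proof. intros H N; induction N; simpl; [apply H|]. specialize (H (S N)); lra. Qed.

Lemma Series_nonneg_bounded (u : nat -> R) (K : R) :
  (forall k, 0 <= u k) -> (forall N, sum_f_R0 u N <= K) ->
  Series u <= K /\ (forall N, sum_f_R0 u N <= Series u).
Proof.
  intros Hu HK.
  assert (Hinc : forall n, sum_n u n <= sum_n u (S n)).
  { intros n. rewrite !sum_n_Reals. simpl. specialize (Hu (S n)). lra. }
  assert (Hb : forall n, sum_n u n <= K) by (intros n; rewrite sum_n_Reals; apply HK).
  destruct (ex_finite_lim_seq_incr _ _ Hinc Hb) as [l Hl].
  assert (HS : Series u = l) by (unfold Series; rewrite (is_lim_seq_unique _ _ Hl); reflexivity).
  rewrite HS. split.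
  - exact (is_lim_seq_le _ (fun _ => K) l K Hb Hl (is_lim_seq_const K)).
  - intros N. rewrite <- sum_n_Reals. apply (is_lim_seq_incr_compare _ _ Hl Hinc).
Qed.

Lemma INR_S_ge_1 (k : nat) : 1 <= INR (S k).
Proof. rewrite S_INR. pose proof (pos_INR k). lra. Qed.

(** * Sums of powers cut off at [W] *)

(* Each bound telescopes against a cut-off antiderivative: [min (k+1) (W+1) ^ p],
   [min (k+1) W ^ p] and [max (k+1) W ^ (-q)] respectively; the mean value theorem
   ([Rpower_succ_sub]) compares their increments with the terms. *)
Section CutoffSums.

Local Notation head W f := (fun k => if Rle_dec (INR (S k)) W then f (INR (S k)) else 0).
Local Notation tail W f := (fun k => if Rle_dec (INR (S k)) W then 0 else f (INR (S k))).

Lemma sum_head_Rpower_le (p W : R) (N : nat) : 0 < p -> 0 < W ->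
  sum_f_R0 (head W (fun x => Rpower x (p - 1))) N
  <= Rpower 2 (Rabs (p - 1)) / p * Rpower (W + 1) p.
Proof.
  intros Hp HW. set (c := Rpower 2 (Rabs (p - 1))).
  assert (Hc : 0 < c / p) by (apply Rdiv_lt_0_compat; [apply Rpower_pos | lra]).
  set (Y := fun k => - (c / p) * Rpower (Rmin (INR (S k)) (W + 1)) p).
  assert (HY : forall k, 0 < Rmin (INR (S k)) (W + 1))
    by (intros k; pose proof (INR_S_ge_1 k); apply Rmin_glb_lt; lra).
  eapply Rle_trans; [apply sum_f_R0_le_telescope with (Y := Y)|].
  - intros k. unfold Y. rewrite (S_INR (S k)).
    pose proof (INR_S_ge_1 k). set (x := INR (S k)) in *.
    destruct (Rle_dec x W) as [HxW | HxW].
    + rewrite !Rmin_left by lra.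
      destruct (Rpower_succ_sub p x) as [xi [Hd [Hlow _]]]; [lra|]. fold c in Hlow.
      replace (- (c / p) * Rpower x p - - (c / p) * Rpower (x + 1) p)
        with (c / p * (Rpower (x + 1) p - Rpower x p)) by ring.
      rewrite Hd. replace (c / p * (p * Rpower xi (p - 1))) with (c * Rpower xi (p - 1))
        by (field; lra). exact Hlow.
    + assert (Rpower (Rmin x (W + 1)) p <= Rpower (Rmin (x + 1) (W + 1)) p).
      { apply Rle_Rpower_l; [lra|]. split; [apply HY|]. apply Rle_min_compat_r; lra. }
      nra.
  - unfold Y. pose proof (Rpower_pos (Rmin (INR 1) (W + 1)) p).
    assert (Rpower (Rmin (INR (S (S N))) (W + 1)) p <= Rpower (W + 1) p)
      by (apply Rle_Rpower_l; [lra | split; [apply HY | apply Rmin_r]]).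
    nra.
Qed.

Lemma sum_head_Rpower_le_scaled (p W : R) (N : nat) : 0 < p -> 1 <= W ->
  sum_f_R0 (head W (fun x => Rpower x (p - 1))) N
  <= Rpower 2 (Rabs (p - 1)) / p * Rpower 2 p * Rpower W p.
Proof.
  intros Hp HW. eapply Rle_trans; [apply sum_head_Rpower_le; lra|].
  rewrite Rmult_assoc, Rpower_mult_distr by lra.
  apply Rmult_le_compat_l; [apply Rlt_le, Rdiv_lt_0_compat; [apply Rpower_pos | lra]|].
  apply Rle_Rpower_l; lra.
Qed.

Lemma sum_head_Rpower_ge (p W : R) (N : nat) : 0 < p -> 1 <= W ->
  / (Rpower 2 (Rabs (p - 1)) * p) * (Rpower (Rmin (INR (S (S N))) W) p - 1)
  <= sum_f_R0 (head W (fun x => Rpower x (p - 1))) N.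
Proof.
  intros Hp HW. set (c := Rpower 2 (Rabs (p - 1))).
  assert (Hc : 0 < / (c * p)) by (apply Rinv_0_lt_compat, Rmult_lt_0_compat; [apply Rpower_pos | lra]).
  set (Y := fun k => - / (c * p) * Rpower (Rmin (INR (S k)) W) p).
  eapply Rle_trans; [|apply sum_f_R0_ge_telescope with (Y := Y)].
  - unfold Y. change (INR 1) with 1. rewrite (Rmin_left 1 W), Rpower_1_l by lra. right; ring.
  - intros k. unfold Y. rewrite (S_INR (S k)).
    pose proof (INR_S_ge_1 k). set (x := INR (S k)) in *.
    destruct (Rle_dec x W) as [HxW | HxW].
    + rewrite (Rmin_left x W) by lra.
      destruct (Rpower_succ_sub p x) as [xi [Hd [_ Hup]]]; [lra|]. fold c in Hup.
      assert (Rpower (Rmin (x + 1) W) p <= Rpower (x + 1) p).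
      { apply Rle_Rpower_l; [lra|]. split; [apply Rmin_glb_lt; lra | apply Rmin_l]. }
      apply Rle_trans with (/ (c * p) * (Rpower (x + 1) p - Rpower x p)); [nra|].
      rewrite Hd. apply Rle_trans with (/ c * Rpower xi (p - 1)).
      * right. field. split; [apply Rgt_not_eq, Rpower_pos | lra].
      * apply Rle_trans with (/ c * (c * Rpower x (p - 1))).
        -- apply Rmult_le_compat_l; [apply Rlt_le, Rinv_0_lt_compat, Rpower_pos | exact Hup].
        -- right. field. apply Rgt_not_eq, Rpower_pos.
    + rewrite !Rmin_right by lra. lra.
Qed.

Lemma sum_tail_Rpower_le (q W : R) (N : nat) : 0 < q -> 0 <= W ->
  sum_f_R0 (tail W (fun x => Rpower x (- q - 1))) N
  <= Rpower 2 (q + 1) / q * Rpower (Rmax 1 W) (- q).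
Proof.
  intros Hq HW. set (c := Rpower 2 (q + 1)).
  assert (Hc : 0 < c / q) by (apply Rdiv_lt_0_compat; [apply Rpower_pos | lra]).
  set (Y := fun k => c / q * Rpower (Rmax (INR (S k)) W) (- q)).
  assert (HY : forall k, 0 < Rmax (INR (S k)) W)
    by (intros k; pose proof (INR_S_ge_1 k); apply Rlt_le_trans with (INR (S k)); [lra | apply Rmax_l]).
  eapply Rle_trans; [apply sum_f_R0_le_telescope with (Y := Y)|].
  - intros k. unfold Y. rewrite (S_INR (S k)).
    pose proof (INR_S_ge_1 k). set (x := INR (S k)) in *.
    destruct (Rle_dec x W) as [HxW | HxW].
    + assert (Rpower (Rmax (x + 1) W) (- q) <= Rpower (Rmax x W) (- q)).
      { apply Rpower_le_base_nonpos; [lra|]. split; [apply HY|]. apply Rle_max_compat_r; lra. }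
      nra.
    + rewrite !Rmax_left by lra.
      destruct (Rpower_succ_sub (- q) x) as [xi [Hd [Hlow _]]]; [lra|].
      replace (Rabs (- q - 1)) with (q + 1) in Hlow by (rewrite Rabs_left; lra). fold c in Hlow.
      replace (c / q * Rpower x (- q) - c / q * Rpower (x + 1) (- q))
        with (- (c / q) * (Rpower (x + 1) (- q) - Rpower x (- q))) by ring.
      rewrite Hd. replace (- (c / q) * (- q * Rpower xi (- q - 1))) with (c * Rpower xi (- q - 1))
        by (field; lra). exact Hlow.
  - unfold Y. change (INR 1) with 1.
    assert (0 <= c / q * Rpower (Rmax (INR (S (S N))) W) (- q))
      by (apply Rmult_le_pos; [lra | apply Rlt_le, Rpower_pos]).
    lra.
Qed.

End CutoffSums.

Lemma sum_Rpower_le (q : R) (N : nat) : 0 < q ->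
  sum_f_R0 (fun k => Rpower (INR (S k)) (- q - 1)) N <= Rpower 2 (q + 1) / q.
Proof.
  intros Hq.
  rewrite (sum_eq _ (fun k => if Rle_dec (INR (S k)) 0 then 0 else Rpower (INR (S k)) (- q - 1))).
  - eapply Rle_trans; [apply sum_tail_Rpower_le; lra|].
    rewrite Rmax_left, Rpower_1_l by lra. lra.
  - intros k _. pose proof (INR_S_ge_1 k). destruct (Rle_dec (INR (S k)) 0); [lra | reflexivity].
Qed.

(* The exponent is written [- 1 - 1], i.e. [- q - 1] at [q = 1], because the literal [-2]
   denotes [IZR (-2)] and would not match [sum_Rpower_le]. *)
Lemma inv_sq_Rpower (x : R) : 0 < x -> / x ^ 2 = Rpower x (- 1 - 1).
Proof.
  intros Hx. replace (/ x ^ 2) with (Rpower x 0 / x ^ 2)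
    by (rewrite Rpower_O by lra; unfold Rdiv; ring).
  rewrite Rpower_div_pow by lra. f_equal. simpl. ring.
Qed.

Lemma sum_inv_sq_le (N : nat) : sum_f_R0 (fun k => / INR (S k) ^ 2) N <= 4.
Proof.
  rewrite (sum_eq _ (fun k => Rpower (INR (S k)) (- 1 - 1)))
    by (intros k _; apply inv_sq_Rpower; pose proof (INR_S_ge_1 k); lra).
  eapply Rle_trans; [apply (sum_Rpower_le 1); lra|].
  replace (1 + 1) with 2 by ring. rewrite Rpower_2 by lra. lra.
Qed.

Lemma Rmult3_le_compat (a b c b' c' : R) : 0 <= a -> 0 <= b -> 0 <= c ->
  b <= b' -> c <= c' -> a * b * c <= a * b' * c'.
Proof.
  intros Ha Hb Hc Hbb Hcc. apply Rmult_le_compat; auto.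
  - apply Rmult_le_pos; auto.
  - apply Rmult_le_compat_l; auto.
Qed.

Lemma pow4_add_pos (x W : R) : 0 < x -> 0 < x ^ 4 + W ^ 4.
Proof.
  intros Hx. pose proof (pow_lt x 4 Hx).
  assert (0 <= W ^ 4) by (replace (W ^ 4) with ((W ^ 2) ^ 2) by ring; apply pow2_ge_0). lra.
Qed.

Lemma inv_pow4_le (x W : R) : 0 < x -> 0 < W -> / (x ^ 4 + W ^ 4) <= / W ^ 4.
Proof.
  intros Hx HW. pose proof (pow_lt x 4 Hx); pose proof (pow_lt W 4 HW).
  apply Rinv_le_contravar; lra.
Qed.

Lemma Rpower_div_pow4_add_split (x W e : R) : 0 < x -> 0 < W ->
  Rpower x e / (x ^ 4 + W ^ 4)
  <= (if Rle_dec x W then Rpower x e else 0) / W ^ 4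
     + (if Rle_dec x W then 0 else Rpower x (e - 4)).
Proof.
  intros Hx HW. pose proof (Rpower_pos x e). pose proof (pow_lt x 4 Hx). pose proof (pow_lt W 4 HW).
  destruct (Rle_dec x W).
  - rewrite Rplus_0_r. unfold Rdiv. apply Rmult_le_compat_l; [lra|].
    apply Rinv_le_contravar; lra.
  - unfold Rdiv at 2. rewrite Rmult_0_l, Rplus_0_l.
    replace (e - 4) with (e - INR 4) by (simpl; ring). rewrite <- Rpower_div_pow by lra.
    unfold Rdiv. apply Rmult_le_compat_l; [lra|].
    assert (0 <= W ^ 4) by lra. apply Rinv_le_contravar; lra.
Qed.

Definition mterm (s Z W x : R) : R :=
  / (x ^ 2 * (x ^ 4 + W ^ 4) * Rpower (x ^ 2 + Z ^ 2) s).

Lemma mterm_eq (s Z W x : R) : 0 < x ->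
  mterm s Z W x = / x ^ 2 * / (x ^ 4 + W ^ 4) * Rpower (x ^ 2 + Z ^ 2) (- s).
Proof. intros Hx. unfold mterm. rewrite Rpower_Ropp, !Rinv_mult. reflexivity.
Qed.

Lemma mterm_pos (s Z W x : R) : 0 < x -> 0 < mterm s Z W x.
Proof.
  intros Hx. rewrite mterm_eq by lra.
  repeat apply Rmult_lt_0_compat;
    [apply Rinv_0_lt_compat, pow_lt | apply Rinv_0_lt_compat, pow4_add_pos | apply Rpower_pos]; lra.
Qed.

Lemma mterm_le_nonneg (s Z W x : R) : 0 <= s -> 0 < x -> 0 < Z -> 0 < W ->
  mterm s Z W x <= Rpower Z (- 2 * s) / W ^ 4 / x ^ 2.
Proof.
  intros Hs Hx HZ HW. rewrite mterm_eq by lra.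
  assert (HZs : Rpower (x ^ 2 + Z ^ 2) (- s) <= Rpower Z (- 2 * s)).
  { replace (- 2 * s) with (2 * - s) by ring. rewrite <- Rpower_sq by lra.
    apply Rpower_le_base_nonpos; [lra|]. pose proof (pow_lt Z 2 HZ). pose proof (pow2_ge_0 x). lra. }
  apply Rle_trans with (/ x ^ 2 * / W ^ 4 * Rpower Z (- 2 * s)); [|right; unfold Rdiv; ring].
  apply Rmult3_le_compat; auto using inv_pow4_le.
  - apply Rlt_le, Rinv_0_lt_compat, pow_lt, Hx.
  - apply Rlt_le, Rinv_0_lt_compat. pose proof (pow_lt x 4 Hx); pose proof (pow_lt W 4 HW); lra.
  - apply Rlt_le, Rpower_pos.
Qed.

Lemma mterm_le_nonpos (s Z W x : R) : s <= 0 -> 0 < x -> 0 < Z -> 0 < W ->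
  mterm s Z W x <= Rpower 2 (- s) *
    (Rpower Z (- 2 * s) / W ^ 4 / x ^ 2 + Rpower x (- 2 * s - 2) / (x ^ 4 + W ^ 4)).
Proof.
  intros Hs Hx HZ HW. rewrite mterm_eq by lra.
  replace (- 2 * s - 2) with (- 2 * s - INR 2) by (simpl; ring).
  rewrite <- Rpower_div_pow by lra.
  pose proof (pow_lt x 2 Hx); pose proof (pow_lt Z 2 HZ).
  assert (Hsum : Rpower (x ^ 2 + Z ^ 2) (- s)
                 <= Rpower 2 (- s) * (Rpower x (- 2 * s) + Rpower Z (- 2 * s))).
  { replace (- 2 * s) with (2 * - s) by ring. rewrite <- !Rpower_sq by lra.
    apply Rpower_add_le; lra. }
  pose proof (inv_pow4_le x W Hx HW).
  pose proof (Rinv_0_lt_compat _ (pow4_add_pos x W Hx)).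
  pose proof (Rinv_0_lt_compat _ (pow_lt x 2 Hx)).
  pose proof (Rpower_pos 2 (- s)); pose proof (Rpower_pos Z (- 2 * s)).
  apply Rle_trans with (/ x ^ 2 * / (x ^ 4 + W ^ 4)
                        * (Rpower 2 (- s) * (Rpower x (- 2 * s) + Rpower Z (- 2 * s)))).
  - apply Rmult_le_compat_l; [apply Rlt_le, Rmult_lt_0_compat|]; lra.
  - assert (0 <= Rpower 2 (- s) * Rpower Z (- 2 * s) * / x ^ 2 * (/ W ^ 4 - / (x ^ 4 + W ^ 4)))
      by (repeat apply Rmult_le_pos; lra).
    unfold Rdiv. nra.
Qed.

Lemma mterm_ge_one (s Z W : R) : 1 <= Z -> 1 <= W ->
  Rpower Z (- 2 * s) / W ^ 4 / (2 * Rpower 2 (Rabs s)) <= mterm s Z W 1.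
Proof.
  intros HZ HW. rewrite mterm_eq by lra. rewrite !pow1, Rinv_1, Rmult_1_l.
  pose proof (pow_lt Z 2 ltac:(lra)). pose proof (pow_lt W 4 ltac:(lra)).
  assert (HW4 : 1 <= W ^ 4) by (rewrite <- (pow1 4); apply pow_incr; lra).
  assert (HZ2 : 1 <= Z ^ 2) by (rewrite <- (pow1 2); apply pow_incr; lra).
  destruct (Rpower_le_double (Z ^ 2) (1 + Z ^ 2) (- s)) as [_ Hcmp]; [lra | lra |].
  rewrite Rpower_sq, Rabs_Ropp in Hcmp by lra.
  replace (2 * - s) with (- 2 * s) in Hcmp by ring.
  pose proof (Rpower_pos 2 (Rabs s)); pose proof (Rpower_pos (1 + Z ^ 2) (- s)).
  assert (Hinv : / (2 * W ^ 4) <= / (1 + W ^ 4)) by (apply Rinv_le_contravar; lra).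
  apply Rle_trans with (/ (2 * W ^ 4) * Rpower (1 + Z ^ 2) (- s)).
  - apply Rle_trans with (/ (2 * W ^ 4) * / Rpower 2 (Rabs s) * (Rpower 2 (Rabs s) * Rpower (1 + Z ^ 2) (- s))).
    + unfold Rdiv. rewrite Rinv_mult.
      apply Rle_trans with (/ (2 * W ^ 4) * / Rpower 2 (Rabs s) * Rpower Z (- 2 * s));
        [right; rewrite Rinv_mult; ring|].
      apply Rmult_le_compat_l; [|exact Hcmp].
      apply Rlt_le, Rmult_lt_0_compat; apply Rinv_0_lt_compat; lra.
    + right. field. split; lra.
  - apply Rmult_le_compat_r; lra.
Qed.

Lemma mterm_ge_head (s Z W x : R) : s <= 0 -> 0 < x -> 0 < Z -> 0 < W ->
  (if Rle_dec x W then Rpower x (- 2 * s - 2) else 0) / (2 * W ^ 4) <= mterm s Z W x.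
Proof.
  intros Hs Hx HZ HW. pose proof (mterm_pos s Z W x Hx).
  destruct (Rle_dec x W) as [HxW | HxW]; [|unfold Rdiv; lra].
  rewrite mterm_eq by lra.
  replace (- 2 * s - 2) with (- 2 * s - INR 2) by (simpl; ring).
  rewrite <- Rpower_div_pow by lra.
  pose proof (pow_lt x 2 Hx); pose proof (pow_lt Z 2 HZ).
  assert (Hpow : Rpower x (- 2 * s) <= Rpower (x ^ 2 + Z ^ 2) (- s)).
  { replace (- 2 * s) with (2 * - s) by ring. rewrite <- Rpower_sq by lra.
    apply Rle_Rpower_l; lra. }
  assert (Hinv : / (2 * W ^ 4) <= / (x ^ 4 + W ^ 4)).
  { apply Rinv_le_contravar; [apply pow4_add_pos; lra|].
    assert (x ^ 4 <= W ^ 4) by (apply pow_incr; lra). lra. }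
  apply Rle_trans with (/ x ^ 2 * / (2 * W ^ 4) * Rpower x (- 2 * s)); [right; unfold Rdiv; ring|].
  apply Rmult3_le_compat; auto.
  - apply Rlt_le, Rinv_0_lt_compat; lra.
  - apply Rlt_le, Rinv_0_lt_compat. pose proof (pow_lt W 4 HW); lra.
  - apply Rlt_le, Rpower_pos.
Qed.


(** * Two-sided bounds on the series *)

(* [M_term s lam z1 z2 k] unfolds to [mterm s (jz z1 z2) (jw lam z1 z2) (INR (S k))], so
   [M_sigma s lam z1 z2] is convertible to [sqrt (Msum s (jz z1 z2) (jw lam z1 z2))]. *)
Definition Msum (s Z W : R) : R := Series (fun k => mterm s Z W (INR (S k))).

Lemma Msum_bounded (s Z W K : R) :
  (forall N, sum_f_R0 (fun k => mterm s Z W (INR (S k))) N <= K) ->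
  Msum s Z W <= K /\ forall N, sum_f_R0 (fun k => mterm s Z W (INR (S k))) N <= Msum s Z W.
Proof.
  intros HK. apply Series_nonneg_bounded; [|exact HK].
  intros k. apply Rlt_le, mterm_pos. pose proof (INR_S_ge_1 k). lra.
Qed.

Lemma sum_mterm_le_nonneg (s Z W : R) (N : nat) : 0 <= s -> 0 < Z -> 0 < W ->
  sum_f_R0 (fun k => mterm s Z W (INR (S k))) N <= 4 * (Rpower Z (- 2 * s) / W ^ 4).
Proof.
  intros Hs HZ HW. set (A := Rpower Z (- 2 * s) / W ^ 4).
  apply Rle_trans with (sum_f_R0 (fun k => / INR (S k) ^ 2 * A) N).
  - apply sum_Rle. intros k _. pose proof (INR_S_ge_1 k).
    rewrite Rmult_comm. apply mterm_le_nonneg; lra.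
  - rewrite <- scal_sum, (Rmult_comm 4). apply Rmult_le_compat_l; [|apply sum_inv_sq_le].
    apply Rlt_le, Rdiv_lt_0_compat; [apply Rpower_pos | apply pow_lt; lra].
Qed.

Lemma sum_mterm_le_nonpos (s Z W : R) (N : nat) : - 1 / 2 < s <= 0 -> 1 <= Z -> 0 < W ->
  sum_f_R0 (fun k => mterm s Z W (INR (S k))) N
  <= Rpower 2 (- s) * (4 + Rpower 2 (1 + 2 * s + 1) / (1 + 2 * s)) * (Rpower Z (- 2 * s) / W ^ 4).
Proof.
  intros Hs HZ HW. set (A := Rpower Z (- 2 * s) / W ^ 4).
  set (q := 1 + 2 * s). assert (Hq : 0 < q) by (unfold q; lra).
  assert (HZ1 : 1 <= Rpower Z (- 2 * s)) by (apply Rpower_ge_1; lra).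
  pose proof (pow_lt W 4 HW).
  apply Rle_trans with
    (sum_f_R0 (fun k => (/ INR (S k) ^ 2 + Rpower (INR (S k)) (- q - 1))
                        * (Rpower 2 (- s) * A)) N).
  - apply sum_Rle. intros k _. pose proof (INR_S_ge_1 k). set (x := INR (S k)) in *.
    eapply Rle_trans; [apply mterm_le_nonpos; lra|].
    replace (- 2 * s - 2) with (- q - 1) by (unfold q; ring).
    assert (Htail : Rpower x (- q - 1) / (x ^ 4 + W ^ 4) <= A * Rpower x (- q - 1)).
    { pose proof (Rpower_pos x (- q - 1)).
      apply Rle_trans with (Rpower x (- q - 1) / W ^ 4).
      - unfold Rdiv. apply Rmult_le_compat_l; [lra | apply inv_pow4_le; lra].
      - unfold A, Rdiv. pose proof (Rinv_0_lt_compat _ H).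
        apply Rle_trans with (Rpower Z (- 2 * s) * Rpower x (- q - 1) * / W ^ 4); [|right; ring].
        apply Rmult_le_compat_r; nra. }
    pose proof (Rpower_pos 2 (- s)).
    apply Rle_trans with (Rpower 2 (- s) * (A / x ^ 2 + A * Rpower x (- q - 1)));
      [apply Rmult_le_compat_l; unfold A, Rdiv in *; lra | right; unfold Rdiv; ring].
  - rewrite <- scal_sum, plus_sum.
    replace (Rpower 2 (- s) * (4 + Rpower 2 (q + 1) / q) * A)
      with (Rpower 2 (- s) * A * (4 + Rpower 2 (q + 1) / q)) by ring.
    apply Rmult_le_compat_l.
    + apply Rlt_le, Rmult_lt_0_compat; [apply Rpower_pos | apply Rdiv_lt_0_compat; [apply Rpower_pos | lra]].
    + apply Rplus_le_compat; [apply sum_inv_sq_le | apply sum_Rpower_le; lra].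
Qed.

Lemma sum_mterm_le_neg (s : R) : - 5 / 2 < s < - 1 / 2 -> exists K, 0 < K /\
  forall Z W N, 0 < Z -> 1 <= W ->
  sum_f_R0 (fun k => mterm s Z W (INR (S k))) N
  <= K * (Rpower Z (- 2 * s) / W ^ 4 + Rpower W (- 2 * s - 5)).
Proof.
  intros Hs. set (p := - 2 * s - 1). set (q := 5 + 2 * s).
  assert (Hp : 0 < p) by (unfold p; lra). assert (Hq : 0 < q) by (unfold q; lra).
  set (Kh := Rpower 2 (Rabs (p - 1)) / p * Rpower 2 p).
  set (Kt := Rpower 2 (q + 1) / q).
  assert (HKh : 0 < Kh) by (apply Rmult_lt_0_compat; [apply Rdiv_lt_0_compat|]; try apply Rpower_pos; lra).
  assert (HKt : 0 < Kt) by (apply Rdiv_lt_0_compat; [apply Rpower_pos | lra]).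
  set (K := Rpower 2 (- s)). assert (HK : 0 < K) by apply Rpower_pos.
  exists (K * (4 + Kh + Kt)). split; [apply Rmult_lt_0_compat; lra|].
  intros Z W N HZ HW. pose proof (pow_lt W 4 ltac:(lra)).
  set (A := Rpower Z (- 2 * s) / W ^ 4). set (B := Rpower W (- 2 * s - 5)).
  assert (HA : 0 < A) by (apply Rdiv_lt_0_compat; [apply Rpower_pos | lra]).
  assert (HB : 0 < B) by apply Rpower_pos.
  set (h := fun k => if Rle_dec (INR (S k)) W then Rpower (INR (S k)) (p - 1) else 0).
  set (t := fun k => if Rle_dec (INR (S k)) W then 0 else Rpower (INR (S k)) (- q - 1)).
  assert (Hh : sum_f_R0 h N * / W ^ 4 <= Kh * B).
  { assert (HWB : Rpower W p / W ^ 4 = B)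
      by (rewrite Rpower_div_pow by lra; unfold B, p; f_equal; simpl; ring).
    rewrite <- HWB. unfold Rdiv. rewrite <- Rmult_assoc.
    apply Rmult_le_compat_r; [apply Rlt_le, Rinv_0_lt_compat; lra|].
    apply sum_head_Rpower_le_scaled; lra. }
  assert (Ht : sum_f_R0 t N <= Kt * B).
  { eapply Rle_trans; [apply sum_tail_Rpower_le; lra|].
    rewrite Rmax_right by lra. unfold B, Kt. right. do 2 f_equal. unfold q. ring. }
  pose proof (sum_inv_sq_le N).
  apply Rle_trans with (sum_f_R0 (fun k => / INR (S k) ^ 2 * (K * A)
                                           + h k * (K / W ^ 4) + t k * K) N).
  - apply sum_Rle. intros k _. pose proof (INR_S_ge_1 k).
    eapply Rle_trans; [apply mterm_le_nonpos; lra|].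
    unfold h, t. set (x := INR (S k)) in *.
    replace (- 2 * s - 2) with (p - 1) by (unfold p; ring).
    pose proof (Rpower_div_pow4_add_split x W (p - 1) ltac:(lra) ltac:(lra)) as Hsplit.
    replace (p - 1 - 4) with (- q - 1) in Hsplit by (unfold p, q; ring).
    fold A K. unfold Rdiv in *. destruct (Rle_dec x W); nra.
  - rewrite !plus_sum, <- !scal_sum.
    apply Rle_trans with (K * (4 * A + Kh * B + Kt * B)).
    + apply Rle_trans with (K * (A * sum_f_R0 (fun k => / INR (S k) ^ 2) N
                                 + sum_f_R0 h N * / W ^ 4 + sum_f_R0 t N));
        [right; unfold Rdiv; ring|].
      apply Rmult_le_compat_l; nra.
    + apply Rle_trans with (K * ((4 + Kh + Kt) * (A + B))); [|right; ring].
      apply Rmult_le_compat_l; nra.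
Qed.

Lemma sum_mterm_ge_neg (s : R) : s < - 1 / 2 -> exists c, 0 < c /\
  forall Z W, 0 < Z -> 2 <= W ->
  exists N, c * Rpower W (- 2 * s - 5) <= sum_f_R0 (fun k => mterm s Z W (INR (S k))) N.
Proof.
  intros Hs. set (p := - 2 * s - 1). assert (Hp : 0 < p) by (unfold p; lra).
  set (c := Rpower 2 (Rabs (p - 1))). assert (Hc : 0 < c) by apply Rpower_pos.
  assert (H2p : Rpower 2 (- p) < 1)
    by (rewrite <- (Rpower_O 2) by lra; apply Rpower_lt; lra).
  exists ((1 - Rpower 2 (- p)) / (2 * c * p)).
  split; [apply Rdiv_lt_0_compat; [lra | apply Rmult_lt_0_compat; lra]|].
  intros Z W HZ HW.
  destruct (INR_archimed 1 W) as [N HN]; [lra|]. rewrite Rmult_1_r in HN.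
  exists N. pose proof (pow_lt W 4 ltac:(lra)).
  pose proof (sum_head_Rpower_ge p W N Hp ltac:(lra)) as Hhead. fold c in Hhead.
  rewrite Rmin_right in Hhead by (rewrite !S_INR; lra).
  assert (HWp : 1 <= Rpower 2 (- p) * Rpower W p).
  { assert (Rpower 2 (- p) * Rpower 2 p = 1)
      by (rewrite <- Rpower_plus, Rplus_opp_l; apply Rpower_O; lra).
    assert (Rpower 2 p <= Rpower W p) by (apply Rle_Rpower_l; lra).
    pose proof (Rpower_pos 2 (- p)). nra. }
  assert (HB : Rpower W (- 2 * s - 5) = Rpower W p / W ^ 4)
    by (rewrite Rpower_div_pow by lra; f_equal; unfold p; simpl; ring).
  eapply Rle_trans; [|apply sum_Rle with
    (An := fun k => (if Rle_dec (INR (S k)) W then Rpower (INR (S k)) (p - 1) else 0) * / (2 * W ^ 4))].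
  - rewrite <- scal_sum. rewrite HB.
    apply Rle_trans with (/ (2 * W ^ 4) * (/ (c * p) * (Rpower W p - 1))).
    + apply Rle_trans with ((1 - Rpower 2 (- p)) * Rpower W p * / (2 * W ^ 4) * / (c * p));
        [right; field; repeat split; lra|].
      apply Rle_trans with ((Rpower W p - 1) * / (2 * W ^ 4) * / (c * p)); [|right; ring].
      apply Rmult_le_compat_r; [apply Rlt_le, Rinv_0_lt_compat, Rmult_lt_0_compat; lra|].
      apply Rmult_le_compat_r; [apply Rlt_le, Rinv_0_lt_compat; lra|]. nra.
    + apply Rmult_le_compat_l; [apply Rlt_le, Rinv_0_lt_compat; lra | exact Hhead].
  - intros k _. pose proof (INR_S_ge_1 k).
    replace (p - 1) with (- 2 * s - 2) by (unfold p; ring).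
    apply mterm_ge_head; lra.
Qed.

Lemma Msum_ge_first (s Z W K : R) : 1 <= Z -> 1 <= W ->
  (forall N, sum_f_R0 (fun k => mterm s Z W (INR (S k))) N <= K) ->
  Rpower Z (- 2 * s) / W ^ 4 / (2 * Rpower 2 (Rabs s)) <= Msum s Z W.
Proof.
  intros HZ HW HK. destruct (Msum_bounded s Z W K HK) as [_ Hpartial].
  eapply Rle_trans; [apply mterm_ge_one; lra | apply (Hpartial O)].
Qed.

Lemma Rpower_div_sq_sq (s Z W : R) : 0 < W ->
  (Rpower Z (- s) / W ^ 2) ^ 2 = Rpower Z (- 2 * s) / W ^ 4.
Proof.
  intros HW. pose proof (pow_lt W 2 HW).
  unfold Rdiv. rewrite Rpow_mult_distr, <- (Rpower_2 (Rpower Z (- s))), Rpower_mult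
    by apply Rpower_pos.
  replace (- s * 2) with (- 2 * s) by ring. f_equal. rewrite pow_inv. f_equal. ring.
Qed.

Lemma Rpower_ratio_sq (s W : R) : 0 < W ->
  (Rpower W (- s) / Rpower W (5 / 2)) ^ 2 = Rpower W (- 2 * s - 5).
Proof.
  intros HW. unfold Rdiv. rewrite <- Rpower_Ropp, <- Rpower_plus, <- Rpower_2, Rpower_mult
    by apply Rpower_pos.
  f_equal. field.
Qed.

Lemma Msum_equiv_gt (s : R) : - 1 / 2 < s -> exists c C, 0 < c /\ 0 < C /\
  forall Z W, 1 <= Z -> 1 <= W ->
  c * (Rpower Z (- s) / W ^ 2) ^ 2 <= Msum s Z W /\
  Msum s Z W <= C * (Rpower Z (- s) / W ^ 2) ^ 2.
Proof.
  intros Hs.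
  assert (Hup : exists C, 0 < C /\ forall Z W N, 1 <= Z -> 1 <= W ->
            sum_f_R0 (fun k => mterm s Z W (INR (S k))) N <= C * (Rpower Z (- 2 * s) / W ^ 4)).
  { destruct (Rle_or_lt 0 s) as [Hs0 | Hs0].
    - exists 4. split; [lra|]. intros Z W N HZ HW. apply sum_mterm_le_nonneg; lra.
    - eexists. split; [|intros Z W N HZ HW; apply sum_mterm_le_nonpos; lra].
      apply Rmult_lt_0_compat; [apply Rpower_pos|].
      pose proof (Rdiv_lt_0_compat (Rpower 2 (1 + 2 * s + 1)) (1 + 2 * s) (Rpower_pos _ _) ltac:(lra)).
      lra. }
  destruct Hup as [C [HC Hup]].
  exists (/ (2 * Rpower 2 (Rabs s))), C.
  split; [apply Rinv_0_lt_compat; pose proof (Rpower_pos 2 (Rabs s)); lra|]. split; [exact HC|].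
  intros Z W HZ HW. rewrite Rpower_div_sq_sq by lra. split.
  - eapply Rle_trans; [|apply (Msum_ge_first s Z W _ HZ HW (fun N => Hup Z W N HZ HW))].
    right. unfold Rdiv. ring.
  - apply (Msum_bounded s Z W _ (fun N => Hup Z W N HZ HW)).
Qed.

Lemma Msum_equiv_lt (s : R) : - 5 / 2 < s < - 1 / 2 -> exists c C, 0 < c /\ 0 < C /\
  forall Z W, 1 <= Z -> 2 <= W ->
  c * (Rpower Z (- s) / W ^ 2) ^ 2 <= Msum s Z W /\
  c * (Rpower W (- s) / Rpower W (5 / 2)) ^ 2 <= Msum s Z W /\
  Msum s Z W <= C * ((Rpower Z (- s) / W ^ 2) ^ 2 + (Rpower W (- s) / Rpower W (5 / 2)) ^ 2).
Proof.
  intros Hs.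
  destruct (sum_mterm_le_neg s Hs) as [C [HC Hup]].
  destruct (sum_mterm_ge_neg s ltac:(lra)) as [cB [HcB Hlow]].
  set (cA := / (2 * Rpower 2 (Rabs s))).
  assert (HcA : 0 < cA) by (apply Rinv_0_lt_compat; pose proof (Rpower_pos 2 (Rabs s)); lra).
  exists (Rmin cA cB), C. split; [apply Rmin_glb_lt; lra|]. split; [exact HC|].
  intros Z W HZ HW.
  rewrite Rpower_div_sq_sq, Rpower_ratio_sq by lra.
  assert (HK : forall N, sum_f_R0 (fun k => mterm s Z W (INR (S k))) N
             <= C * (Rpower Z (- 2 * s) / W ^ 4 + Rpower W (- 2 * s - 5)))
    by (intros N; apply Hup; lra).
  destruct (Msum_bounded s Z W _ HK) as [HM Hpartial].
  pose proof (Rmin_l cA cB); pose proof (Rmin_r cA cB).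
  assert (0 < Rpower Z (- 2 * s) / W ^ 4)
    by (apply Rdiv_lt_0_compat; [apply Rpower_pos | apply pow_lt; lra]).
  pose proof (Rpower_pos W (- 2 * s - 5)).
  split; [|split; [|exact HM]].
  - apply Rle_trans with (cA * (Rpower Z (- 2 * s) / W ^ 4)); [apply Rmult_le_compat_r; lra|].
    eapply Rle_trans; [|apply (Msum_ge_first s Z W _ HZ ltac:(lra) HK)].
    right. unfold cA, Rdiv. ring.
  - destruct (Hlow Z W ltac:(lra) HW) as [N HN].
    apply Rle_trans with (cB * Rpower W (- 2 * s - 5)); [apply Rmult_le_compat_r; lra|].
    eapply Rle_trans; [exact HN | apply Hpartial].
Qed.

(** * From the series to [M_sigma] *)

Lemma sqrt_sandwich (S m c C : R) : 0 <= m -> 0 <= c -> 0 <= C ->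
  c * m ^ 2 <= S -> S <= C * m ^ 2 -> sqrt c * m <= sqrt S /\ sqrt S <= sqrt C * m.
Proof.
  intros Hm Hc HC Hlow Hup. pose proof (pow2_ge_0 m).
  rewrite <- (sqrt_pow2 m Hm), <- !sqrt_mult_alt by nra.
  split; apply sqrt_le_1_alt; assumption.
Qed.

Lemma Rmax_le_ind_le_sum (a b : R) : 0 <= a -> 0 <= b ->
  Rmax a b <= a * ind_le b a + b * ind_le a b <= 2 * Rmax a b.
Proof.
  intros Ha Hb. unfold ind_le, Rmax.
  destruct (Rle_dec b a), (Rle_dec a b), (Rle_dec a b); lra.
Qed.

Lemma sqrt_max_sandwich (S a b c C : R) : 0 <= a -> 0 <= b -> 0 < c -> 0 < C ->
  c * a ^ 2 <= S -> c * b ^ 2 <= S -> S <= C * (a ^ 2 + b ^ 2) ->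
  sqrt c / 2 * (a * ind_le b a + b * ind_le a b) <= sqrt S /\
  sqrt S <= sqrt (2 * C) * (a * ind_le b a + b * ind_le a b).
Proof.
  intros Ha Hb Hc HC Hla Hlb Hu.
  destruct (Rmax_le_ind_le_sum a b Ha Hb) as [Hm1 Hm2].
  assert (Hmax : 0 <= Rmax a b /\ c * Rmax a b ^ 2 <= S /\ S <= 2 * C * Rmax a b ^ 2).
  { unfold Rmax. destruct (Rle_dec a b) as [Hab | Hab].
    - assert (a ^ 2 <= b ^ 2) by (apply pow_incr; lra).
      assert (C * a ^ 2 <= C * b ^ 2) by (apply Rmult_le_compat_l; lra). lra.
    - assert (b ^ 2 <= a ^ 2) by (apply pow_incr; lra).
      assert (C * b ^ 2 <= C * a ^ 2) by (apply Rmult_le_compat_l; lra). lra. }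
  destruct Hmax as [Hm0 [Hl Hup]].
  destruct (sqrt_sandwich S (Rmax a b) c (2 * C) Hm0 ltac:(lra) ltac:(lra) Hl Hup) as [H1 H2].
  pose proof (sqrt_pos c); pose proof (sqrt_pos (2 * C)).
  split; nra.
Qed.

Lemma ind_le_iff (x y u v : R) : (x <= y <-> u <= v) -> ind_le x y = ind_le u v.
Proof. intros H. unfold ind_le. destruct (Rle_dec x y), (Rle_dec u v); tauto. Qed.

Lemma ln_le_iff (x y : R) : 0 < x -> 0 < y -> (ln x <= ln y <-> x <= y).
Proof.
  intros Hx Hy. split; [|apply ln_le; lra].
  intros H. destruct (Rle_or_lt x y) as [|Hlt]; [assumption|].
  pose proof (ln_increasing y x Hy Hlt). lra.
Qed.

Lemma ind_le_kappa (s Z W : R) : s < 0 -> 0 < Z -> 0 < W ->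
  ind_le (Rpower W ((2 * s + 1) / (2 * s))) Z
    = ind_le (Rpower W (- s) / Rpower W (5 / 2)) (Rpower Z (- s) / W ^ 2) /\
  ind_le Z (Rpower W ((2 * s + 1) / (2 * s)))
    = ind_le (Rpower Z (- s) / W ^ 2) (Rpower W (- s) / Rpower W (5 / 2)).
Proof.
  intros Hs HZ HW.
  set (a := Rpower Z (- s) / W ^ 2). set (b := Rpower W (- s) / Rpower W (5 / 2)).
  set (Wk := Rpower W ((2 * s + 1) / (2 * s))).
  assert (Ha : 0 < a) by (apply Rdiv_lt_0_compat; [apply Rpower_pos | apply pow_lt; lra]).
  assert (Hb : 0 < b) by (apply Rdiv_lt_0_compat; apply Rpower_pos).
  assert (HWk : 0 < Wk) by apply Rpower_pos.
  assert (Hln : ln a - ln b = - s * (ln Z - ln Wk)).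
  { unfold a, b, Wk, Rdiv.
    rewrite !ln_mult, !ln_Rinv, !ln_Rpower, ln_pow;
      try apply Rinv_0_lt_compat; try apply Rpower_pos; try apply pow_lt; try lra.
    simpl INR. field. lra. }
  split; apply ind_le_iff.
  - rewrite <- (ln_le_iff _ _ HWk HZ), <- (ln_le_iff _ _ Hb Ha). split; intros; nra.
  - rewrite <- (ln_le_iff _ _ HZ HWk), <- (ln_le_iff _ _ Ha Hb). split; intros; nra.
Qed.

Lemma jz_ge_2 (z1 z2 : Z) : (z1 <> 0%Z \/ z2 <> 0%Z) -> 2 <= jz z1 z2.
Proof.
  intros Hz. unfold jz.
  assert (Hsq : forall z : Z, z <> 0%Z -> 1 <= IZR z ^ 2).
  { intros z Hz0. destruct (Z_lt_le_dec 0 z).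
    - assert (1 <= IZR z) by (apply IZR_le; lia). nra.
    - assert (IZR z <= -1) by (apply IZR_le; lia). nra. }
  assert (H1 : 1 <= IZR z1 ^ 2 + IZR z2 ^ 2).
  { pose proof (pow2_ge_0 (IZR z1)); pose proof (pow2_ge_0 (IZR z2)).
    destruct Hz as [Hnz | Hnz]; pose proof (Hsq _ Hnz); lra. }
  apply sqrt_le_1_alt in H1. rewrite sqrt_1 in H1. lra.
Qed.

Lemma jz_le_jw (lam : C) (z1 z2 : Z) : 0 <= jz z1 z2 -> jz z1 z2 <= jw lam z1 z2.
Proof.
  intros H. unfold jw. rewrite <- (sqrt_pow2 (jz z1 z2)) at 1 by exact H.
  apply sqrt_le_1_alt. pose proof (Cmod_ge_0 lam). lra.
Qed.

(* Only [|lambda|] enters, through [<omega>]. *)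
Lemma sim_on_M_sigma (d1 d2 s c C : R) (f : R -> R -> R) : 0 < c -> 0 < C ->
  (forall Z W, 2 <= Z -> Z <= W ->
     c * f Z W <= sqrt (Msum s Z W) /\ sqrt (Msum s Z W) <= C * f Z W) ->
  sim_on d1 d2 (M_sigma s) (fun lam z1 z2 => f (jz z1 z2) (jw lam z1 z2)).
Proof.
  intros Hc HC H. exists c, C. split; [exact Hc|]. split; [exact HC|].
  intros lam z1 z2 _ Hz. pose proof (jz_ge_2 z1 z2 Hz).
  apply H; [lra | apply jz_le_jw; lra].
Qed.

Theorem lemma9 (a nu d1 d2 sigma : R)
  (Ha : 0 < a) (Hnu : 0 < nu) (Hd1 : 0 < d1)
  (Hd2 : d2 < Rmin (nu * PI ^ 2 / (2 * a ^ 2)) (nu / 2))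
  (Hs1 : -5/2 < sigma) (Hs2 : sigma < 3/2) (Hs3 : sigma <> -1/2) :
  (-1/2 < sigma ->
     sim_on d1 d2 (M_sigma sigma)
       (fun lam z1 z2 => Rpower (jz z1 z2) (- sigma) / (jw lam z1 z2) ^ 2))
  /\
  (sigma < -1/2 ->
     let kappa := (2 * sigma + 1) / (2 * sigma) in
     sim_on d1 d2 (M_sigma sigma)
       (fun lam z1 z2 =>
          Rpower (jz z1 z2) (- sigma) / (jw lam z1 z2) ^ 2
            * ind_le (Rpower (jw lam z1 z2) kappa) (jz z1 z2)
          + Rpower (jw lam z1 z2) (- sigma) / Rpower (jw lam z1 z2) (5/2)
            * ind_le (jz z1 z2) (Rpower (jw lam z1 z2) kappa))).
Proof.
  split.
  - intros Hgt. destruct (Msum_equiv_gt sigma Hgt) as [c [C [Hc [HC Hbounds]]]].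
    apply (sim_on_M_sigma d1 d2 sigma (sqrt c) (sqrt C) (fun Z W => Rpower Z (- sigma) / W ^ 2));
      [apply sqrt_lt_R0; lra | apply sqrt_lt_R0; lra|].
    intros Z W HZ HZW. destruct (Hbounds Z W) as [Hlow Hup]; [lra | lra |].
    apply sqrt_sandwich; try lra.
    apply Rlt_le, Rdiv_lt_0_compat; [apply Rpower_pos | apply pow_lt; lra].
  - intros Hlt kappa.
    destruct (Msum_equiv_lt sigma ltac:(lra)) as [c [C [Hc [HC Hbounds]]]].
    apply (sim_on_M_sigma d1 d2 sigma (sqrt c / 2) (sqrt (2 * C))
      (fun Z W => Rpower Z (- sigma) / W ^ 2 * ind_le (Rpower W kappa) Z
                  + Rpower W (- sigma) / Rpower W (5 / 2) * ind_le Z (Rpower W kappa)));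
      [pose proof (sqrt_lt_R0 c Hc); lra | apply sqrt_lt_R0; lra|].
    intros Z W HZ HZW. destruct (Hbounds Z W) as [HlowA [HlowB Hup]]; [lra | lra |].
    unfold kappa. destruct (ind_le_kappa sigma Z W) as [-> ->]; [lra | lra | lra |].
    apply sqrt_max_sandwich; try assumption.
    + apply Rlt_le, Rdiv_lt_0_compat; [apply Rpower_pos | apply pow_lt; lra].
    + apply Rlt_le, Rdiv_lt_0_compat; apply Rpower_pos.
Qed.
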